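(* Fix weights $w_i\ge0$ with $\sum_{i\in N}w_i=1$. There exists a unique PAF $\psi:\mathcal P^N\to\mathcal P$ that is Level-SP and satisfies weighted proportionality with respect to $\mathbf w$. It is the PAF whose associated CAF is $$\Psi(P_1,\dots,P_n)(a)=\mu_{\mathbf w}(P_1(a),\dots,P_n(a))\quad\text{for all }a\in\Lambda,\ (P_1,\dots,P_n)\in\mathcal C^N,$$ where $\mu_{\mathbf w}(\mathbf r)=\sup\{y\in[0,1]:\sum_{i:\,r_i\ge y}w_i\ge y\}$; in particular this PAF is certainty preserving.
   Context: Let $N=\{1,\dots,n\}$, $\Lambda\subseteq\mathbb R$ a nonempty Borel set, $\mathcal P$ the Borel probability measures on $\Lambda$, $\mathcal C$ the CDFs on $\Lambda$, $\pi(p)(a)=p(\{x\in\Lambda:x\le a\})$. A PAF is a map $\psi:\mathcal P^N\to\mathcal P$ with associated CAF $\Psi$ given by $\Psi(\pi(p_1),\dots,\pi(p_n))=\pi(\psi(p_1,\dots,p_n))$; $P_i=\pi(p_i)$. $\mathbf z_{-i}(z_i')$ is $\mathbf z$ with $i$-th coordinate replaced by $z_i'$. $\psi$ is Level-SP if for every $i$, $\mathbf P$, $P_i'$, $a$: $P_i(a)<\Psi(\mathbf P)(a)\Rightarrow\Psi(\mathbf P)(a)\le\Psi(\mathbf P_{-i}(P_i'))(a)$ and $P_i(a)>\Psi(\mathbf P)(a)\Rightarrow\Psi(\mathbf P)(a)\ge\Psi(\mathbf P_{-i}(P_i'))(a)$. $\delta_a$ denotes the Dirac mass at $a$. $\psi$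 satisfies weighted proportionality (w.r.t. $\mathbf w$) if $\psi(\delta_{a_1},\dots,\delta_{a_n})=\sum_{i\in N}w_i\delta_{a_i}$ for all $(a_1,\dots,a_n)\in\Lambda^N$. $\psi$ is certainty preserving if for every profile $\mathbf p$ and Borel $A\subseteq\Lambda$, $p_i(A)=1$ for all $i$ implies $\psi(\mathbf p)(A)=1$. *)

From HB Require Import structures.
From mathcomp Require Import all_boot all_order all_algebra.
From mathcomp Require Import all_classical all_reals all_analysis.
Set Implicit Arguments. Unset Strict Implicit. Unset Printing Implicit Defensive.
Import Order.TTheory GRing.Theory Num.Theory.
Local Open Scope classical_set_scope.
Local Open Scope ring_scope.

(* Borel probability measures on Lambda (a Borel subset of R), represented as
   Borel probability measures on R that are concentrated on Lambda. *)
Definition PL (R : realType) (Lam : set R) :=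
  {p : probability R R | p Lam = 1%E}.

Definition cdfL (R : realType) (Lam : set R) (p : PL Lam) (a : R) : R :=
  fine (sval p [set x | Lam x /\ x <= a]).

Definition PAF (R : realType) (Lam : set R) (n : nat) :=
  ('I_n -> PL Lam) -> PL Lam.

Definition upd (T : Type) (n : nat) (p : 'I_n -> T) (i : 'I_n) (q : T) : 'I_n -> T :=
  fun j => if j == i then q else p j.

Definition LevelSP (R : realType) (Lam : set R) (n : nat) (psi : PAF Lam n) : Prop :=
  forall (i : 'I_n) (p : 'I_n -> PL Lam) (q : PL Lam) (a : R), Lam a ->
    (cdfL (p i) a < cdfL (psi p) a -> cdfL (psi p) a <= cdfL (psi (upd p i q)) a) /\
    (cdfL (p i) a > cdfL (psi p) a -> cdfL (psi p) a >= cdfL (psi (upd p i q)) a).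

Definition WeightedProp (R : realType) (Lam : set R) (n : nat) (w : 'I_n -> R)
    (psi : PAF Lam n) : Prop :=
  forall (a : 'I_n -> R) (p : 'I_n -> PL Lam),
    (forall i, Lam (a i)) ->
    (forall i A, measurable A -> sval (p i) A = \d_(a i) A) ->
    forall A, measurable A -> sval (psi p) A = (\sum_(i < n) (w i)%:E * \d_(a i) A)%E.

Definition CertaintyPreserving (R : realType) (Lam : set R) (n : nat)
    (psi : PAF Lam n) : Prop :=
  forall (p : 'I_n -> PL Lam) (A : set R), measurable A -> A `<=` Lam ->
    (forall i, sval (p i) A = 1%E) -> sval (psi p) A = 1%E.

Definition mu_w (R : realType) (n : nat) (w : 'I_n -> R) (r : 'I_n -> R) : R :=
  sup [set y : R | 0 <= y <= 1 /\ y <= \sum_(i < n | y <= r i) w i].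

(* Fix a level [a] in [Lam].  Level strategy-proofness implies that the
   aggregate level [Psi(P)(a)] does not change when an agent whose report at
   [a] is strictly on one side of it switches to another report strictly on
   that side, and that switching a report to 0 (resp. 1) at [a] cannot raise
   (resp. lower) it.  Replacing
   the agents one at a time by Dirac masses at [a] or at a point [b > a] of
   [Lam], according to the side of [Psi(P)(a)] on which [P_i(a)] lies, and
   evaluating the final profile by weighted proportionality squeezes
   [Psi(P)(a)] between the sums defining [mu_w] (when no such [b] exists,
   every CDF equals 1 at [a]).
   Conversely, [t |-> mu_w(P_1(t), ..., P_n(t))] is a distribution function
   whose increments are dominated by those of [sum_i P_i], so its
   Lebesgue-Stieltjes measure [nu] satisfies [nu <= sum_i p_i]: it lives on
   [Lam] and gives full mass to every set of common certainty.  Uniqueness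
   holds because a probability on [Lam] is determined by its CDF at the points
   of [Lam]: the CDF at [x] is approached from inside [Lam] below
   [sup (Lam `&` ]-oo, x])]. *)

From HB Require Import structures.
From mathcomp Require Import all_boot all_order all_algebra.
From mathcomp Require Import all_classical all_reals all_analysis.
From mathcomp Require Import lra.
Import Order.TTheory GRing.Theory Num.Theory.
Import numFieldTopology.Exports numFieldNormedType.Exports.
Local Open Scope classical_set_scope.
Local Open Scope ring_scope.
Set Implicit Arguments.
Unset Strict Implicit.
Unset Printing Implicit Defensive.

Section measure_cdf.
Variable R : realType.
Local Open Scope ereal_scope.

Lemma measure_itvoc (m : {measure set R -> \bar R}) (a b : R) :
  (a <= b)%R -> m `]-oo, b]%classic < +oo ->
  m `]a, b]%classic = m `]-oo, b]%classic - m `]-oo, a]%classic.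
Proof.
move=> ab mb.
have -> : `]a, b]%classic = `]-oo, b]%classic `\` `]-oo, a]%classic.
  by rewrite -[RHS]setCK setCD setCitvl setUC -[LHS]setCK setCitv.
by rewrite measureD ?setIidr//; exact: subset_itvl.
Qed.

Lemma eq_measure_itvNyc (m1 m2 : {measure set R -> \bar R}) :
  (forall x, m1 `]-oo, x]%classic = m2 `]-oo, x]%classic) ->
  (forall x, m1 `]-oo, x]%classic < +oo) ->
  forall A, measurable A -> m1 A = m2 A.
Proof.
move=> m12 m1_fin A mA.
have m2_fin x : m2 `]-oo, x]%classic < +oo by rewrite -m12.
apply: (@measure_unique _ R R (@ocitv R)
  (fun k : nat => `](- k%:R)%R, (k%:R)%R]%classic)) => //.
- exact: (@ocitvI R).
- by move=> k; exact: is_ocitv.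
- rewrite -subTset => x _; exists (Num.Def.truncn `|x|).+1 => //=.
  have x_lt : (`|x| < (Num.Def.truncn `|x|).+1%:R)%R by rewrite truncnS_gt.
  rewrite in_itv /=; apply/andP; split.
    by rewrite ltrNl (le_lt_trans _ x_lt)// ler_normr lexx orbT.
  by rewrite ltW// (le_lt_trans _ x_lt)// ler_norm.
- move=> X /ocitvP [->|[[a b] /= ab ->]]; first by rewrite !measure0.
  by rewrite !measure_itvoc ?m12 ?ltW.
- move=> k; rewrite (le_lt_trans _ (m1_fin k%:R))//.
  by apply: le_measure; rewrite ?inE//; apply: subset_itvr; rewrite bnd_simp.
Qed.

End measure_cdf.

(* [lebesgue_stieltjes_measure] lives on [measurableTypeR R]; the copies
   below carry the same measure on the canonical measurable type [R]. *)
Definition ls_measure (R : realType) (f : cumulative R R) : set R -> \bar R :=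
  lebesgue_stieltjes_measure f.
HB.instance Definition _ (R : realType) (f : cumulative R R) :=
  isMeasure.Build _ R R (ls_measure f) (measure0 (lebesgue_stieltjes_measure f))
    (measure_ge0 (lebesgue_stieltjes_measure f))
    (@measure_semi_sigma_additive _ (measurableTypeR R) _
       (lebesgue_stieltjes_measure f)).

Definition ls_prob (R : realType) (f : cumulativeBounded (0:R) 1) :
  set R -> \bar R := ls_measure f.
HB.instance Definition _ (R : realType) (f : cumulativeBounded (0:R) 1) :=
  Measure.on (ls_prob f).
HB.instance Definition _ (R : realType) (f : cumulativeBounded (0:R) 1) :=
  Measure_isProbability.Build _ R R (ls_prob f)
    (probability_setT (lebesgue_stieltjes_measure f)).

Section lebesgue_stieltjes_itvNyc.
Variable R : realType.

Lemma lebesgue_stieltjes_itvoc (f : cumulative R R) (a b : R) : a <= b ->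
  lebesgue_stieltjes_measure f `]a, b]%classic = (f b - f a)%:E.
Proof.
move=> ab; rewrite /lebesgue_stieltjes_measure /measure_extension/=.
by rewrite measurable_mu_extE/= ?wlength_itv_bnd//; exact: is_ocitv.
Qed.

Lemma lebesgue_stieltjes_itvNyc (f : cumulative R R) (l : R) : f @ -oo --> l ->
  forall x, lebesgue_stieltjes_measure f `]-oo, x]%classic = (f x - l)%:E.
Proof.
move=> fl x; rewrite itvNybndEbigcup.
have : lebesgue_stieltjes_measure f `](- k%:R)%R, x] @[k --> \oo] -->
    (f x - l)%:E.
  suff : (f x - f (- k%:R))%:E @[k --> \oo] --> (f x - l)%:E.
    apply: cvg_trans; apply: near_eq_cvg; near=> k.
    rewrite lebesgue_stieltjes_itvoc// lerNl; near: k; exact: nbhs_infty_ger.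
  apply: cvg_EFin; first by near=> k.
  apply: cvgB; first exact: cvg_cst.
  apply: (cvg_comp _ _ _ fl).
  by apply: (cvg_comp _ _ cvgr_idn); rewrite ninfty.
have : lebesgue_stieltjes_measure f `](- k%:R)%R, x] @[k --> \oo] -->
    lebesgue_stieltjes_measure f (\bigcup_k `](- k%:R)%R, x]%classic).
  apply: nondecreasing_cvg_mu => //; first exact: bigcup_measurable.
  by move=> *; apply/subsetPset/subset_itv; rewrite leBSide//= lerN2 ler_nat.
exact: cvg_unique.
Unshelve. all: by end_near. Qed.

End lebesgue_stieltjes_itvNyc.

Section mu_w.
Variables (R : realType) (n : nat) (w : 'I_n -> R).
Hypothesis w_ge0 : forall i, 0 <= w i.

Definition mu_w_set (r : 'I_n -> R) : set R :=
  [set y : R | 0 <= y <= 1 /\ y <= \sum_(i < n | y <= r i) w i].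

Lemma ler_sum_w_cond (P Q : pred 'I_n) : (forall i, P i -> Q i) ->
  \sum_(i < n | P i) w i <= \sum_(i < n | Q i) w i.
Proof.
move=> PQ; rewrite [X in X <= _]big_mkcond [X in _ <= X]big_mkcond /=.
apply: ler_sum => i _; case: ifPn => Pi; first by rewrite PQ.
by case: ifPn.
Qed.

Lemma mu_w_set0 r : mu_w_set r 0.
Proof. by split; [rewrite lexx ler01 | exact: sumr_ge0]. Qed.

Lemma has_sup_mu_w_set r : has_sup (mu_w_set r).
Proof. by split; [exists 0; exact: mu_w_set0 | exists 1 => y [/andP[]]]. Qed.

Lemma mu_w_ub r y : mu_w_set r y -> y <= mu_w w r.
Proof. by move=> ry; apply: sup_upper_bound => //; exact: has_sup_mu_w_set. Qed.

Lemma mu_w_le r z : (forall y, mu_w_set r y -> y <= z) -> mu_w w r <= z.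
Proof. by apply: ge_sup; exists 0; exact: mu_w_set0. Qed.

Lemma mu_w_ge0 r : 0 <= mu_w w r.
Proof. exact/mu_w_ub/mu_w_set0. Qed.

Lemma mu_w_le1 r : mu_w w r <= 1.
Proof. by apply: mu_w_le => y [/andP[]]. Qed.

Lemma mu_w_adherent r x : x < mu_w w r -> exists2 y, mu_w_set r y & x < y.
Proof.
move=> x_lt; have mux_gt0 : 0 < mu_w w r - x by rewrite subr_gt0.
have [y ry] := sup_adherent mux_gt0 (has_sup_mu_w_set r).
by rewrite opprB addrC subrK; exists y.
Qed.

Lemma mu_w_setN0 r y : mu_w_set r y -> y != 0 ->
  y <= \sum_(i < n | y <= r i) w i /\ exists i, y <= r i.
Proof.
move=> [/andP[y_ge0 _] y_le] y_neq0; split => //.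
apply/not_existsP => no_i; move: y_le y_neq0.
rewrite big_pred0 => [y_le0|i]; last by apply/negP; exact: no_i.
by rewrite eq_le y_le0 y_ge0.
Qed.

Lemma le_mu_w r r' : (forall i, r i <= r' i) -> mu_w w r <= mu_w w r'.
Proof.
move=> rr'; apply: mu_w_le => y [y01 y_le]; apply: mu_w_ub; split => //.
by apply: (le_trans y_le); apply: ler_sum_w_cond => i /le_trans; apply.
Qed.

Lemma mu_w_leD r r' c : 0 <= c -> (forall i, r' i <= r i + c) ->
  mu_w w r' <= mu_w w r + c.
Proof.
move=> c_ge0 rr'; apply: mu_w_le => y [/andP[y_ge0 y_le1] y_le].
rewrite -lerBlDr; have [yc_le0|yc_gt0] := leP (y - c) 0.
  exact: le_trans yc_le0 (mu_w_ge0 r).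
apply: mu_w_ub; split.
  by rewrite (ltW yc_gt0) /= (le_trans _ y_le1)// lerBlDr lerDl.
apply: (le_trans _ (le_trans y_le _)); first by rewrite lerBlDr lerDl.
by apply: ler_sum_w_cond => i /le_trans /(_ (rr' i)); rewrite lerBlDr.
Qed.

Lemma mu_w_le_sum r : (forall i, 0 <= r i) -> mu_w w r <= \sum_(i < n) r i.
Proof.
move=> r_ge0; apply: mu_w_le => y ry.
have [->|/(mu_w_setN0 ry) [_ [i y_le]]] := eqVneq y 0.
  exact: sumr_ge0.
by rewrite (le_trans y_le)// (bigD1 i)//= lerDl; exact: sumr_ge0.
Qed.

Lemma mu_w_upd_lt r i t : r i < mu_w w r -> mu_w w r <= mu_w w (upd r i t).
Proof.
move=> ri_lt; rewrite leNgt; apply/negP => upd_lt.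
have [y [y01 y_le]] : exists2 y, mu_w_set r y &
    Num.max (r i) (mu_w w (upd r i t)) < y.
  by apply: mu_w_adherent; rewrite gt_max ri_lt upd_lt.
rewrite gt_max => /andP[ri_lt_y upd_lt_y].
suff : y <= mu_w w (upd r i t) by rewrite leNgt upd_lt_y.
apply: mu_w_ub; split => //; apply: (le_trans y_le).
apply: ler_sum_w_cond => j /= y_le_rj; rewrite /upd; case: eqP => // eji.
by move: ri_lt_y; rewrite -eji ltNge y_le_rj.
Qed.

Lemma mu_w_upd_gt r i t : mu_w w r < r i -> mu_w w (upd r i t) <= mu_w w r.
Proof.
move=> lt_ri; apply: mu_w_le => y [/andP[y_ge0 y_le1] y_le].
rewrite leNgt; apply/negP => mu_lt_y.
have [y_le_ri|ri_lt_y] := leP y (r i).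
  suff : y <= mu_w w r by rewrite leNgt mu_lt_y.
  apply: mu_w_ub; split; first by rewrite y_ge0 y_le1.
  apply: (le_trans y_le); apply: ler_sum_w_cond => j /=; rewrite /upd.
  by case: eqP => [->|].
suff : r i <= mu_w w r by rewrite leNgt lt_ri.
apply: mu_w_ub; split.
  by rewrite (le_trans (mu_w_ge0 r) (ltW lt_ri)) /= (le_trans (ltW ri_lt_y)).
apply: (le_trans (ltW ri_lt_y)); apply: (le_trans y_le).
apply: ler_sum_w_cond => j /=; rewrite /upd.
by case: eqP => [->//|_ /(lt_le_trans ri_lt_y)/ltW].
Qed.

Hypothesis w_sum1 : \sum_(i < n) w i = 1.

Lemma mu_w_indicator (P : pred 'I_n) :
  mu_w w (fun i => if P i then 1 else 0) = \sum_(i < n | P i) w i.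
Proof.
have sumP_le1 : \sum_(i < n | P i) w i <= 1.
  by rewrite -w_sum1; exact: ler_sum_w_cond.
apply/le_anti/andP; split.
  apply: mu_w_le => y ry; have [->|y_neq0] := eqVneq y 0; first exact: sumr_ge0.
  have y_gt0 : 0 < y by rewrite lt_def y_neq0; case: ry => /andP[].
  have [y_le _] := mu_w_setN0 ry y_neq0.
  apply: (le_trans y_le); apply: ler_sum_w_cond => i /=; case: ifPn => // _.
  by rewrite leNgt y_gt0.
apply: mu_w_ub; split; first by rewrite sumr_ge0.
by apply: ler_sum_w_cond => i /= ->.
Qed.

Lemma mu_w_cst1 r : (forall i, 1 <= r i) -> mu_w w r = 1.
Proof.
move=> r_ge1; apply/le_anti; rewrite mu_w_le1 /=.
apply: (@le_trans _ _ (mu_w w (fun=> 1))); last exact: le_mu_w.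
by have /= -> := mu_w_indicator xpredT; rewrite w_sum1.
Qed.

Lemma mu_w_ge_sum r : (forall i, r i <= 1) ->
  1 - \sum_(i < n) (1 - r i) <= mu_w w r.
Proof.
move=> r_le1; rewrite lerBlDr -[leLHS](mu_w_cst1 (r := fun=> 1))//.
apply: mu_w_leD => [|i]; first by apply: sumr_ge0 => i _; rewrite subr_ge0.
rewrite -lerBlDl (bigD1 i)//= lerDl.
by apply: sumr_ge0 => j _; rewrite subr_ge0.
Qed.

End mu_w.

Definition idR (R : realType) : R -> R := id.
HB.instance Definition _ (R : realType) :=
  @isMeasurableFun.Build _ _ R R (@idR R) (@measurable_id _ _ setT).

Section cdfR.
Variables (R : realType) (Lam : set R).
Local Open Scope ereal_scope.

Definition cdfR (p : PL Lam) (x : R) : R := fine (sval p `]-oo, x]%classic).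

Lemma cdfRE (p : PL Lam) x : sval p `]-oo, x]%classic = (cdfR p x)%:E.
Proof. by rewrite fineK// fin_num_measure. Qed.

Lemma cdfR_cdf (p : PL Lam) : cdfR p = fine \o cdf (@idR R : {RV sval p >-> R}).
Proof. by []. Qed.

Lemma cdfR_ge0 (p : PL Lam) x : (0 <= cdfR p x)%R.
Proof. exact: fine_ge0. Qed.

Lemma cdfR_le1 (p : PL Lam) x : (cdfR p x <= 1)%R.
Proof. by rewrite -lee_fin -cdfRE probability_le1. Qed.

Lemma cdfR_nondecreasing (p : PL Lam) : nondecreasing (cdfR p).
Proof.
move=> x y xy; rewrite -lee_fin -!cdfRE le_measure ?inE//.
by apply: subset_itvl; rewrite bnd_simp.
Qed.

Lemma cdfR_right_continuous (p : PL Lam) : right_continuous (cdfR p).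
Proof.
move=> x; rewrite cdfR_cdf; apply: fine_cvg.
by rewrite fineK ?fin_num_measure//; exact: cdf_right_continuous.
Qed.

Local Close Scope ereal_scope.

Lemma cvg_cdfRNy0 (p : PL Lam) : cdfR p @ -oo --> (0:R).
Proof. by rewrite cdfR_cdf; exact/fine_cvg/cvg_cdfNy0. Qed.

Lemma cvg_cdfRy1 (p : PL Lam) : cdfR p @ +oo --> (1:R).
Proof. by rewrite cdfR_cdf; exact/fine_cvg/cvg_cdfy1. Qed.

End cdfR.

Section concentrated_probability.
Variables (R : realType) (Lam : set R).
Hypothesis mLam : measurable Lam.
Local Open Scope ereal_scope.

Lemma setIL_leE (x : R) :
  [set y | Lam y /\ (y <= x)%R] = Lam `&` `]-oo, x]%classic.
Proof. by apply/seteqP; split => y /=; rewrite in_itv. Qed.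

Lemma measurable_setIL_le (x : R) : measurable [set y | Lam y /\ (y <= x)%R].
Proof. by rewrite setIL_leE; exact: measurableI. Qed.

Lemma PL_setIL (p : PL Lam) A : measurable A -> sval p A = sval p (A `&` Lam).
Proof.
case: p => P /= P_Lam mA; rewrite (measureDI P mA mLam) -[RHS]add0e.
congr (_ + _); apply/eqP; rewrite eq_le measure_ge0 andbT.
have <- : P (~` Lam) = 0 by rewrite probability_setC // P_Lam subee.
apply: le_measure; rewrite ?inE; [exact: measurableD|exact: measurableC|].
by move=> x [].
Qed.

Lemma cdfLE (p : PL Lam) (x : R) :
  sval p [set y | Lam y /\ (y <= x)%R] = (cdfL p x)%:E.
Proof.
by rewrite /cdfL fineK// fin_num_measure//; exact: measurable_setIL_le.
Qed.

Lemma cdfL_cdfR (p : PL Lam) : cdfL p = cdfR p.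
Proof.
apply/funext => x; apply: EFin_inj.
by rewrite -cdfLE -cdfRE [RHS]PL_setIL// setIC -setIL_leE.
Qed.

Lemma cdfL_ge0 (p : PL Lam) x : (0 <= cdfL p x)%R.
Proof. exact: fine_ge0. Qed.

Lemma cdfL_le1 (p : PL Lam) x : (cdfL p x <= 1)%R.
Proof. by rewrite cdfL_cdfR cdfR_le1. Qed.

Local Close Scope ereal_scope.

Lemma dirac_Lam b : Lam b -> (\d_b : probability R R) Lam = 1%E.
Proof. by move=> Lb; rewrite [LHS]diracE mem_set. Qed.

Definition dirac_PL b (Lb : Lam b) : PL Lam := exist _ _ (dirac_Lam Lb).

Lemma cdfL_dirac_PL b (Lb : Lam b) a :
  cdfL (dirac_PL Lb) a = if b <= a then 1 else 0.
Proof.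
rewrite /cdfL /= indicE; case: ifPn => [ba|nba]; first by rewrite mem_set.
by rewrite memNset //= => -[_]; apply/negP.
Qed.

End concentrated_probability.

Section cdfL_on_Lam.
Variables (R : realType) (Lam : set R).
Hypothesis mLam : measurable Lam.

Let setIL_le (x : R) := [set y | Lam y /\ y <= x].

Lemma cvg_measure_setIL_sup (m : {measure set R -> \bar R}) (x : R)
    (a : nat -> R) : let s := sup (setIL_le x) in
  ~ Lam s -> (forall k, setIL_le x (a k)) -> (forall k, s - k.+1%:R^-1 < a k) ->
  m (setIL_le (a k)) @[k --> \oo] --> m (setIL_le x).
Proof.
move=> s s_notin aL a_gt.
have L_sup : has_sup (setIL_le x) by split; [exists (a 0%N) | exists x => y []].
have L_lt_s y : setIL_le x y -> y < s.
  move=> Ly; rewrite lt_def sup_upper_bound// andbT.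
  by apply/eqP => sy; apply: s_notin; rewrite sy; case: Ly.
pose E k := setIL_le x `&` `]-oo, s - k.+1%:R^-1]%classic.
have mE k : measurable (E k).
  by apply: measurableI => //; exact: measurable_setIL_le.
have E_nd : nondecreasing_seq E.
  move=> k l kl; apply/subsetPset; apply: setIS; apply: subset_itvl.
  by rewrite bnd_simp lerD2l lerN2 lef_pV2 ?posrE// ler_nat.
have E_cup : \bigcup_k E k = setIL_le x.
  apply/seteqP; split=> [y [k _ []]//|y Ly].
  have sy_gt0 : 0 < s - y by rewrite subr_gt0 L_lt_s.
  exists (Num.Def.truncn (s - y)^-1) => //; split => //=.
  by rewrite in_itv /= lerBrDl -lerBrDr ltW// invf_plt ?posrE// truncnS_gt.
have E_sub k : E k `<=` setIL_le (a k).
  move=> y [Ly]; rewrite /= in_itv /= => ys; split; first by case: Ly.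
  exact/ltW/(le_lt_trans ys)/a_gt.
have D_sub k : setIL_le (a k) `<=` setIL_le x.
  by move=> y [Ly yk]; split => //; exact/(le_trans yk)/(aL k).2.
have mE_le k : (m (E k) <= m (setIL_le (a k)) <= m (setIL_le x))%E.
  by rewrite !le_measure ?inE//; exact: measurable_setIL_le.
apply: (squeeze_cvge (f := m \o E) (h := cst (m (setIL_le x)))).
- exact: nearW.
- rewrite -[X in _ --> m X]E_cup; apply: nondecreasing_cvg_mu => //.
  exact: bigcup_measurable.
- exact: cvg_cst.
Qed.

Lemma cdfL_eq_on_Lam (q1 q2 : PL Lam) :
  (forall a, Lam a -> cdfL q1 a = cdfL q2 a) -> forall x, cdfL q1 x = cdfL q2 x.
Proof.
move=> q12 x; have [[y0 Ly0]|L0] := pselect (setIL_le x !=set0); last first.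
  rewrite /cdfL (_ : [set y | _] = set0) ?measure0//.
  by apply/seteqP; split => // y Ly; apply: L0; exists y.
have L_sup : has_sup (setIL_le x) by split; [exists y0 | exists x => y []].
set s := sup (setIL_le x).
have [s_in|s_notin] := pselect (Lam s).
  rewrite /cdfL (_ : [set y | _] = setIL_le s); first exact: q12.
  apply/seteqP; split => y [Ly yx]; split => //; first exact: sup_upper_bound.
  by rewrite (le_trans yx)//; apply: ge_sup; [exists y0 | move=> z []].
have [a a_spec] : {a : nat -> R &
    forall k, setIL_le x (a k) /\ s - k.+1%:R^-1 < a k}.
  apply: (@choice _ _ (fun k y => setIL_le x y /\ s - k.+1%:R^-1 < y)) => k.
  have k_gt0 : 0 < k.+1%:R^-1 :> R by rewrite invr_gt0.
  by have [y Ly s_lt] := sup_adherent k_gt0 L_sup; exists y.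
have cvgq (q : PL Lam) : (cdfL q (a k))%:E @[k --> \oo] --> (cdfL q x)%:E.
  rewrite -cdfLE//; under eq_fun do rewrite -cdfLE//.
  by apply: cvg_measure_setIL_sup => // k; case: (a_spec k).
have eq_seq : (fun k => (cdfL q1 (a k))%:E) = (fun k => (cdfL q2 (a k))%:E).
  by apply/funext => k; rewrite q12//; case: (a_spec k) => -[].
have := cvgq q2; rewrite -eq_seq => cvgq2.
by apply/EFin_inj; exact: cvg_unique (cvgq q1) cvgq2.
Qed.

Lemma PL_eq_cdfL (q1 q2 : PL Lam) :
  (forall a, Lam a -> cdfL q1 a = cdfL q2 a) ->
  forall A, measurable A -> sval q1 A = sval q2 A.
Proof.
move=> q12.
have itv12 x : sval q1 `]-oo, x]%classic = sval q2 `]-oo, x]%classic.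
  by rewrite !cdfRE -!cdfL_cdfR// (cdfL_eq_on_Lam q12).
have q1_fin x : (sval q1 `]-oo, x]%classic < +oo)%E.
  by rewrite cdfRE ltry.
exact: eq_measure_itvNyc itv12 q1_fin.
Qed.

End cdfL_on_Lam.

Section profile_replacement.
Variables (T : Type) (n : nat).

Lemma upd_eq (q : 'I_n -> T) i t : upd q i t i = t.
Proof. by rewrite /upd eqxx. Qed.

Lemma updK (q : 'I_n -> T) i t : upd (upd q i t) i (q i) = q.
Proof. by apply/funext => j; rewrite /upd; case: eqP => // ->. Qed.

Definition mix_prefix (target p : 'I_n -> T) (k : nat) : 'I_n -> T :=
  fun i => if (i < k)%N then target i else p i.

Lemma mix_prefixS (target p : 'I_n -> T) k (kn : (k < n)%N) :
  upd (mix_prefix target p k) (Ordinal kn) (target (Ordinal kn)) =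
  mix_prefix target p k.+1.
Proof.
apply/funext => j; rewrite /upd /mix_prefix ltnS.
have [->|jk] := eqVneq j (Ordinal kn); first by rewrite leqnn.
rewrite [(j <= k)%N]leq_eqVlt (_ : (j == k :> nat) = false)//.
by apply: contraNF jk => /eqP jk; apply/eqP/val_inj.
Qed.

Lemma replace_profile_ind (target p : 'I_n -> T) (P : ('I_n -> T) -> Prop) :
  P p ->
  (forall k (kn : (k < n)%N), P (mix_prefix target p k) ->
     P (upd (mix_prefix target p k) (Ordinal kn) (target (Ordinal kn)))) ->
  P target.
Proof.
move=> Pp Pupd; suff Pmix k : (k <= n)%N -> P (mix_prefix target p k).
  have -> : target = mix_prefix target p n.
    by apply/funext => i; rewrite /mix_prefix ltn_ord.
  exact: Pmix.
elim: k => [_|k IH kn]; first by rewrite (_ : mix_prefix _ _ _ = p).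
by rewrite -mix_prefixS; apply: Pupd; exact/IH/ltnW.
Qed.

End profile_replacement.

Section level_strategyproof.
Variables (R : realType) (n : nat) (Lam : set R) (w : 'I_n -> R).
Hypotheses (mLam : measurable Lam) (w_ge0 : forall i, 0 <= w i)
  (w_sum1 : \sum_(i < n) w i = 1).
Variable psi : PAF Lam n.
Hypotheses (psi_SP : LevelSP psi) (psi_WP : WeightedProp w psi).
Variables (a : R) (La : Lam a).

Let Phi (q : 'I_n -> PL Lam) := cdfL (psi q) a.

Lemma Phi_upd_below q i t : cdfL (q i) a < Phi q -> cdfL t a < Phi q ->
  Phi (upd q i t) = Phi q.
Proof.
move=> qi_lt t_lt; have Phi_le := (psi_SP i q t La).1 qi_lt.
apply/le_anti; rewrite Phi_le andbT.
have : cdfL (upd q i t i) a < Phi (upd q i t).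
  by rewrite upd_eq (lt_le_trans t_lt).
by move=> /(psi_SP i (upd q i t) (q i) La).1; rewrite updK.
Qed.

Lemma Phi_upd_above q i t : Phi q < cdfL (q i) a -> Phi q < cdfL t a ->
  Phi (upd q i t) = Phi q.
Proof.
move=> lt_qi lt_t; have Phi_ge := (psi_SP i q t La).2 lt_qi.
apply/le_anti; rewrite Phi_ge /=.
have : Phi (upd q i t) < cdfL (upd q i t i) a.
  by rewrite upd_eq (le_lt_trans Phi_ge).
by move=> /(psi_SP i (upd q i t) (q i) La).2; rewrite updK.
Qed.

Lemma Phi_upd_cdfL0 q i t : cdfL t a = 0 -> Phi (upd q i t) <= Phi q.
Proof.
move=> t0; have [Phi_gt0|] := ltP 0 (Phi (upd q i t)); last first.
  by move=> /le_trans; apply; exact: cdfL_ge0.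
have : cdfL (upd q i t i) a < Phi (upd q i t) by rewrite upd_eq t0.
by move=> /(psi_SP i (upd q i t) (q i) La).1; rewrite updK.
Qed.

Lemma Phi_upd_cdfL1 q i t : cdfL t a = 1 -> Phi q <= Phi (upd q i t).
Proof.
move=> t1; have [Phi_lt1|] := ltP (Phi (upd q i t)) 1; last first.
  exact/le_trans/cdfL_le1.
have : Phi (upd q i t) < cdfL (upd q i t i) a by rewrite upd_eq t1.
by move=> /(psi_SP i (upd q i t) (q i) La).2; rewrite updK.
Qed.

Lemma Phi_two_diracs b (Lb : Lam b) (ab : a < b) (T : pred 'I_n) :
  Phi (fun i => if T i then dirac_PL La else dirac_PL Lb) =
  \sum_(i < n | T i) w i.
Proof.
pose c i := if T i then a else b.
have Lc i : Lam (c i) by rewrite /c; case: ifP.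
have pc i A : measurable A ->
    sval (if T i then dirac_PL La else dirac_PL Lb) A = \d_(c i) A.
  by rewrite /c; case: ifP.
rewrite /Phi /cdfL (psi_WP Lc pc (measurable_setIL_le mLam a)).
rewrite (eq_bigr (fun i => (if T i then w i else 0)%:E)); last first.
  move=> i _; rewrite diracE /c.
  case: ifP => Ti; first by rewrite mem_set ?mule1.
  by rewrite memNset ?mule0//= => -[_]; apply/negP; rewrite -ltNge.
by rewrite sumEFin /= -big_mkcond.
Qed.

Lemma Phi_le_mu_w q b : Lam b -> a < b ->
  Phi q <= mu_w w (fun i => cdfL (q i) a).
Proof.
move=> Lb ab; set x := Phi q; set r := fun i => cdfL (q i) a.
pose target i := if x <= r i then dirac_PL La else dirac_PL Lb.
have x_le : x <= Phi target.
  apply: (@replace_profile_ind _ _ target q (fun q' => x <= Phi q')) => // k kn.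
  set q' := mix_prefix _ _ _ => x_le; rewrite {1}/target.
  case: ifPn => [_|].
    by apply: le_trans x_le _; apply: Phi_upd_cdfL1; rewrite cdfL_dirac_PL lexx.
  rewrite -ltNge => r_lt; rewrite Phi_upd_below//.
    by rewrite /q' /mix_prefix /= ltnn; exact: lt_le_trans x_le.
  rewrite cdfL_dirac_PL leNgt ab (lt_le_trans _ x_le)//.
  exact: le_lt_trans (cdfL_ge0 _ _) r_lt.
apply: mu_w_ub => //; split; first by rewrite cdfL_ge0 cdfL_le1.
by rewrite -(Phi_two_diracs Lb ab (fun i => x <= r i)).
Qed.

Lemma mu_w_le_Phi q b : Lam b -> a < b ->
  mu_w w (fun i => cdfL (q i) a) <= Phi q.
Proof.
move=> Lb ab; set x := Phi q; set r := fun i => cdfL (q i) a.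
pose target i := if x < r i then dirac_PL La else dirac_PL Lb.
have le_x : Phi target <= x.
  apply: (@replace_profile_ind _ _ target q (fun q' => Phi q' <= x)) => // k kn.
  set q' := mix_prefix _ _ _ => le_x; rewrite {1}/target.
  case: ifPn => [r_gt|]; last first.
    move=> _; apply: le_trans _ le_x; apply: Phi_upd_cdfL0.
    by rewrite cdfL_dirac_PL leNgt ab.
  rewrite Phi_upd_above//.
    by rewrite /q' /mix_prefix /= ltnn; exact: le_lt_trans le_x r_gt.
  rewrite cdfL_dirac_PL lexx (le_lt_trans le_x)//.
  exact: lt_le_trans r_gt (cdfL_le1 _ _ _).
apply: (mu_w_le w_ge0) => y [_ y_le]; rewrite leNgt; apply/negP => x_lt_y.
suff : y <= x by rewrite leNgt x_lt_y.
apply: (le_trans y_le); apply: (le_trans _ le_x).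
rewrite /target (Phi_two_diracs Lb ab (fun i => x < r i)).
by apply: ler_sum_w_cond => // i /(lt_le_trans x_lt_y).
Qed.

Lemma LevelSP_cdfL q : Phi q = mu_w w (fun i => cdfL (q i) a).
Proof.
have [[b Lb ab]|no_b] := pselect (exists2 b, Lam b & a < b).
  by apply/le_anti; rewrite (Phi_le_mu_w _ Lb ab) (mu_w_le_Phi _ Lb ab).
have cdfL1 (p : PL Lam) : cdfL p a = 1.
  rewrite /cdfL (_ : [set x | _] = Lam); first by rewrite (svalP p).
  apply/seteqP; split => [x []//|x Lx]; split => //.
  by rewrite leNgt; apply/negP => ax; apply: no_b; exists x.
by rewrite /Phi cdfL1 mu_w_cst1// => i; rewrite cdfL1.
Qed.

End level_strategyproof.

(* Bundled so that the weights alone index the distribution functions below,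
   which are declared as instances of [cumulative]. *)
Record weights (R : realType) (n : nat) := Weights {
  weight :> 'I_n -> R;
  weight_ge0 : forall i, 0 <= weight i;
  weight_sum1 : \sum_(i < n) weight i = 1 }.

Section mu_cdfR.
Variables (R : realType) (n : nat) (Lam : set R).
Variables (W : weights R n) (p : 'I_n -> PL Lam).

Definition sum_cdfR (t : R) : R := \sum_(i < n) cdfR (p i) t.

Lemma cvg_sum_cdfR (F : set_system R) {FF : Filter F} (l : 'I_n -> R) :
  (forall i, cdfR (p i) t @[t --> F] --> l i) ->
  sum_cdfR t @[t --> F] --> \sum_(i < n) l i.
Proof.
by move=> pl; apply: (@cvg_big _ _ +%R 0 xpredT add_continuous).
Qed.

Lemma sum_cdfR_nondecreasing : nondecreasing sum_cdfR.
Proof. by move=> x y xy; apply: ler_sum => i _; exact: cdfR_nondecreasing. Qed.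

Definition mu_cdfR (t : R) : R := mu_w W (fun i => cdfR (p i) t).

Lemma mu_cdfR_nondecreasing : nondecreasing mu_cdfR.
Proof.
move=> x y xy; apply: le_mu_w => [|i]; first exact: weight_ge0.
exact: cdfR_nondecreasing.
Qed.

Lemma mu_cdfR_leD x t : x <= t ->
  mu_cdfR t <= mu_cdfR x + (sum_cdfR t - sum_cdfR x).
Proof.
move=> xt; apply: mu_w_leD; first exact: weight_ge0.
  by rewrite subr_ge0; exact: sum_cdfR_nondecreasing.
move=> i; rewrite -lerBlDl /sum_cdfR -sumrB (bigD1 i) //= lerDl.
by apply: sumr_ge0 => j _; rewrite subr_ge0; exact: cdfR_nondecreasing.
Qed.

Lemma mu_cdfR_right_continuous : right_continuous mu_cdfR.
Proof.
move=> x; apply: (@squeeze_cvgr _ _ _ _ (cst (mu_cdfR x))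
  (fun t => mu_cdfR x + (sum_cdfR t - sum_cdfR x))).
- near=> t; have xt : x <= t by apply/ltW; near: t; exact: nbhs_right_gt.
  by rewrite mu_cdfR_nondecreasing //= mu_cdfR_leD.
- exact: cvg_cst.
- rewrite -[X in _ --> X]addr0 -(subrr (sum_cdfR x)).
  apply: cvgD; first exact: cvg_cst.
  apply: cvgB; last exact: cvg_cst.
  by apply: cvg_sum_cdfR => i; exact: cdfR_right_continuous.
Unshelve. all: end_near. Qed.

Lemma cvg_sum_cdfRNy0 : sum_cdfR @ -oo --> (0:R).
Proof.
rewrite [X in _ --> X](_ : 0 = \sum_(i < n) 0); last by rewrite big1.
exact: cvg_sum_cdfR (fun i => cvg_cdfRNy0 (p i)).
Qed.

Lemma cvg_mu_cdfRNy0 : mu_cdfR @ -oo --> (0:R).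
Proof.
apply: (@squeeze_cvgr _ _ _ _ (cst 0) sum_cdfR).
- near=> t; rewrite mu_w_ge0 /=; last exact: weight_ge0.
  by apply: mu_w_le_sum => [|i]; [exact: weight_ge0 | exact: cdfR_ge0].
- exact: cvg_cst.
- exact: cvg_sum_cdfRNy0.
Unshelve. all: end_near. Qed.

Lemma cvg_mu_cdfRy1 : mu_cdfR @ +oo --> (1:R).
Proof.
apply: (@squeeze_cvgr _ _ _ _
  (fun t => 1 - \sum_(i < n) (1 - cdfR (p i) t)) (cst 1)).
- near=> t; rewrite mu_w_le1 ?andbT; last exact: weight_ge0.
  apply: mu_w_ge_sum => [||i].
  - exact: weight_ge0.
  - exact: weight_sum1.
  - exact: cdfR_le1.
- rewrite -[X in _ --> X]subr0; apply: cvgB; first exact: cvg_cst.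
  have cvg_sub i : (1 - cdfR (p i) t) @[t --> +oo] --> (0:R).
    by rewrite -(subrr 1); apply: cvgB; [exact: cvg_cst | exact: cvg_cdfRy1].
  rewrite [X in _ --> X](_ : 0 = \sum_(i < n) 0); last by rewrite big1.
  by apply: (@cvg_big _ _ +%R 0 xpredT add_continuous) => i _; exact: cvg_sub.
- exact: cvg_cst.
Unshelve. all: end_near. Qed.

Definition sum_cdfR_sub_mu (t : R) : R := sum_cdfR t - mu_cdfR t.

Lemma sum_cdfR_sub_mu_nondecreasing : nondecreasing sum_cdfR_sub_mu.
Proof.
move=> x y xy; rewrite /sum_cdfR_sub_mu.
by have := mu_cdfR_leD xy; have := sum_cdfR_nondecreasing xy; lra.
Qed.

Lemma sum_cdfR_sub_mu_right_continuous : right_continuous sum_cdfR_sub_mu.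
Proof.
move=> x; apply: cvgB; last exact: mu_cdfR_right_continuous.
by apply: cvg_sum_cdfR => i; exact: cdfR_right_continuous.
Qed.

Lemma cvg_sum_cdfR_sub_muNy0 : sum_cdfR_sub_mu @ -oo --> (0:R).
Proof.
rewrite -(subrr 0).
by apply: cvgB; [exact: cvg_sum_cdfRNy0 | exact: cvg_mu_cdfRNy0].
Qed.

End mu_cdfR.

HB.instance Definition _ (R : realType) (n : nat) (Lam : set R)
    (W : weights R n) (p : 'I_n -> PL Lam) :=
  isCumulative.Build R _ R (mu_cdfR W p) (@mu_cdfR_nondecreasing R n Lam W p)
    (@mu_cdfR_right_continuous R n Lam W p).
HB.instance Definition _ (R : realType) (n : nat) (Lam : set R)
    (W : weights R n) (p : 'I_n -> PL Lam) :=
  isCumulativeBounded.Build R 0 1 (mu_cdfR W p) (@cvg_mu_cdfRNy0 R n Lam W p)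
    (@cvg_mu_cdfRy1 R n Lam W p).
HB.instance Definition _ (R : realType) (n : nat) (Lam : set R)
    (W : weights R n) (p : 'I_n -> PL Lam) :=
  isCumulative.Build R _ R (sum_cdfR_sub_mu W p)
    (@sum_cdfR_sub_mu_nondecreasing R n Lam W p)
    (@sum_cdfR_sub_mu_right_continuous R n Lam W p).

Section psi_mu.
Variables (R : realType) (n : nat) (Lam : set R) (W : weights R n).
Local Open Scope ereal_scope.

Lemma ls_prob_mu_cdfR_itvNyc (p : 'I_n -> PL Lam) x :
  ls_prob (mu_cdfR W p) `]-oo, x]%classic = (mu_cdfR W p x)%:E.
Proof.
rewrite /ls_prob /ls_measure.
by rewrite (lebesgue_stieltjes_itvNyc (cvg_mu_cdfRNy0 W p)) subr0.
Qed.

(* [ls_prob (mu_cdfR W p)] plus the Lebesgue-Stieltjes measure of the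
   nondecreasing [sum_cdfR_sub_mu W p] has the CDF of [\sum_i p i]. *)
Lemma ls_prob_mu_cdfR_le_sum (p : 'I_n -> PL Lam) C : measurable C ->
  ls_prob (mu_cdfR W p) C <= \sum_(i < n) sval (p i) C.
Proof.
move=> mC.
pose m1 : {measure set R -> \bar R} :=
  measure_add (ls_prob (mu_cdfR W p)) (ls_measure (sum_cdfR_sub_mu W p)).
pose mk (k : nat) : {measure set R -> \bar R} :=
  if (insub k : option 'I_n) is Some i then sval (p i) else mzero.
pose m2 : {measure set R -> \bar R} := msum mk n.
have m2E A : m2 A = \sum_(i < n) sval (p i) A.
  by apply: eq_bigr => i _; rewrite /mk valK.
have m1E A :
    m1 A = ls_prob (mu_cdfR W p) A + ls_measure (sum_cdfR_sub_mu W p) A.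
  exact: measure_addE.
have m1_itv x :
    m1 `]-oo, x]%classic = (mu_cdfR W p x + sum_cdfR_sub_mu W p x)%:E.
  rewrite m1E ls_prob_mu_cdfR_itvNyc /ls_measure.
  by rewrite (lebesgue_stieltjes_itvNyc (cvg_sum_cdfR_sub_muNy0 W p)) subr0.
have m12 : forall A, measurable A -> m1 A = m2 A.
  apply: eq_measure_itvNyc => x; last by rewrite m1_itv ltry.
  rewrite m1_itv m2E (eq_bigr (fun i => (cdfR (p i) x)%:E)) => [|i _].
    by rewrite sumEFin /sum_cdfR_sub_mu addrC subrK.
  exact: cdfRE.
by rewrite -m2E -m12// m1E leeDl.
Qed.

Hypothesis mLam : measurable Lam.

Lemma ls_prob_mu_cdfR_null (p : 'I_n -> PL Lam) C : measurable C ->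
  (forall i, sval (p i) C = 0) ->
  (ls_prob (mu_cdfR W p) : probability R R) C = 0.
Proof.
move=> mC pC0; apply/eqP; rewrite eq_le measure_ge0 andbT.
by rewrite (le_trans (ls_prob_mu_cdfR_le_sum p mC))// big1.
Qed.

Lemma ls_prob_mu_cdfR_certain (p : 'I_n -> PL Lam) A : measurable A ->
  (forall i, sval (p i) A = 1) ->
  (ls_prob (mu_cdfR W p) : probability R R) A = 1.
Proof.
move=> mA pA1; have pAC0 i : sval (p i) (~` A) = 0.
  by rewrite probability_setC// pA1 subee.
have := probability_setC (ls_prob (mu_cdfR W p) : probability R R)
  (measurableC mA).
by rewrite setCK (ls_prob_mu_cdfR_null (measurableC mA) pAC0) sube0.
Qed.

Definition psi_mu : PAF Lam n := fun p =>
  exist _ (ls_prob (mu_cdfR W p) : probability R R)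
    (ls_prob_mu_cdfR_certain mLam (fun i => svalP (p i))).

Lemma cdfL_psi_mu p a : cdfL (psi_mu p) a = mu_w W (fun i => cdfL (p i) a).
Proof.
rewrite cdfL_cdfR// /cdfR /= ls_prob_mu_cdfR_itvNyc /=.
by congr mu_w; apply/funext => i; rewrite cdfL_cdfR.
Qed.

Lemma psi_mu_LevelSP : LevelSP psi_mu.
Proof.
move=> i p q a La; rewrite !cdfL_psi_mu.
have -> : (fun j => cdfL (upd p i q j) a) =
    upd (fun j => cdfL (p j) a) i (cdfL q a).
  by apply/funext => j; rewrite /upd; case: eqP.
by split; [apply: mu_w_upd_lt | apply: mu_w_upd_gt]; exact: weight_ge0.
Qed.

Lemma psi_mu_WeightedProp : WeightedProp W psi_mu.
Proof.
move=> c p Lc pc A mA.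
pose mk (k : nat) : {measure set R -> \bar R} :=
  if (insub k : option 'I_n) is Some i then
    mscale (NngNum (weight_ge0 W i)) (\d_(c i) : {measure set R -> \bar R})
  else mzero.
pose m : {measure set R -> \bar R} := msum mk n.
have mE B : m B = \sum_(i < n) (W i)%:E * \d_(c i) B.
  by apply: eq_bigr => i _; rewrite /mk valK.
rewrite -mE; apply: (@eq_measure_itvNyc R (ls_prob (mu_cdfR W p))) => // x.
  transitivity (mu_cdfR W p x)%:E; first exact: ls_prob_mu_cdfR_itvNyc.
  rewrite mE /mu_cdfR.
  have -> : (fun i => cdfR (p i) x) =
      (fun i => if (c i <= x)%R then 1%R else 0%R).
    apply/funext => i; rewrite /cdfR pc // diracE.
    case: ifPn => cx; first by rewrite mem_set //= in_itv /=.
    by rewrite memNset //= in_itv /=; apply/negP.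
  rewrite mu_w_indicator; [|exact: weight_ge0|exact: weight_sum1].
  rewrite (eq_bigr (fun i => (if (c i <= x)%R then W i else 0%R)%:E)) => [|i _].
    by rewrite sumEFin -big_mkcond.
  rewrite diracE; case: ifPn => cx.
    by rewrite mem_set ?mule1 //= in_itv /=.
  by rewrite memNset ?mule0 //= in_itv /=; apply/negP.
by rewrite (le_lt_trans (probability_le1 _ _)) ?ltry.
Qed.

End psi_mu.

Lemma LevelSP_WeightedProp_psi_mu (R : realType) (n : nat) (Lam : set R)
    (mLam : measurable Lam) (W : weights R n) (psi : PAF Lam n) :
  LevelSP psi -> WeightedProp W psi ->
  forall p A, measurable A -> sval (psi p) A = sval (psi_mu W mLam p) A.
Proof.
move=> psi_SP psi_WP p; apply: PL_eq_cdfL => // a La.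
rewrite cdfL_psi_mu.
exact: (LevelSP_cdfL mLam (weight_ge0 W) (weight_sum1 W) psi_SP psi_WP La).
Qed.

Unset Implicit Arguments.

Theorem mainTheorem12 (R : realType) (n : nat) (Lam : set R)
    (hLam : measurable Lam) (hne : Lam !=set0)
    (w : 'I_n -> R) (hw0 : forall i, 0 <= w i) (hw1 : \sum_(i < n) w i = 1) :
  (exists psi : PAF Lam n, LevelSP psi /\ WeightedProp w psi) /\
  (forall psi1 psi2 : PAF Lam n,
      LevelSP psi1 -> WeightedProp w psi1 ->
      LevelSP psi2 -> WeightedProp w psi2 ->
      forall (p : 'I_n -> PL Lam) (A : set R), measurable A ->
        sval (psi1 p) A = sval (psi2 p) A) /\
  (forall psi : PAF Lam n, LevelSP psi -> WeightedProp w psi ->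
      (forall (p : 'I_n -> PL Lam) (a : R), Lam a ->
         cdfL (psi p) a = mu_w w (fun i => cdfL (p i) a)) /\
      CertaintyPreserving psi).
Proof.
pose W := Weights hw0 hw1.
split.
  exists (psi_mu W hLam).
  by split; [exact: psi_mu_LevelSP | exact: psi_mu_WeightedProp].
split.
  move=> psi1 psi2 SP1 WP1 SP2 WP2 p A mA.
  by rewrite (LevelSP_WeightedProp_psi_mu (W := W) hLam SP1 WP1)//
    (LevelSP_WeightedProp_psi_mu (W := W) hLam SP2 WP2).
move=> psi SP WP; split.
  by move=> p a La; exact: (LevelSP_cdfL hLam hw0 hw1 SP WP La).
move=> p A mA _ pA1.
rewrite (LevelSP_WeightedProp_psi_mu (W := W) hLam SP WP)//.
exact: ls_prob_mu_cdfR_certain.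
Qed.
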